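(* Let $T:\mathcal P(\mathbb R^n)\to\mathcal P(\mathbb R^n)$ be given by $TA=\{y\in\mathbb R^n:\ \langle x,y\rangle\ge 1\ \forall x\in A\}$, and let $\mathcal C=\{TK:K\subseteq\mathbb R^n\}$. Every $K\in\mathcal C$ other than $\emptyset$ and $\mathbb R^n$ has a unique point closest to the origin. For $u\in S^{n-1}$ let $\mathcal C_u$ be the set of those $K\in\mathcal C\setminus\{\emptyset,\mathbb R^n\}$ whose closest point to the origin lies on the ray $\{\lambda u:\lambda>0\}$. Then for every $u\in S^{n-1}$ and every $K\in\mathcal C_u$ we have $TK\in\mathcal C_u$.
   Context: $\mathcal P(\mathbb R^n)$ is the power set of $\mathbb R^n$, $\langle\cdot,\cdot\rangle$ the standard inner product, and $S^{n-1}$ the Euclidean unit sphere. *)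

From HB Require Import structures.
From mathcomp Require Import all_boot all_order all_algebra.
From mathcomp Require Import boolp classical_sets reals.
Set Implicit Arguments. Unset Strict Implicit. Unset Printing Implicit Defensive.
Import Order.TTheory GRing.Theory Num.Theory.
Local Open Scope ring_scope.
Local Open Scope classical_set_scope.

Definition dotv (R : realType) (n : nat) (x y : 'rV[R]_n) : R :=
  \sum_(i < n) x ord0 i * y ord0 i.

Definition Tmap (R : realType) (n : nat) (A : set 'rV[R]_n) : set 'rV[R]_n :=
  [set y | forall x, A x -> 1 <= dotv x y].

Definition inC (R : realType) (n : nat) (K : set 'rV[R]_n) : Prop :=
  exists L : set 'rV[R]_n, K = Tmap L.

Definition closest_to_origin (R : realType) (n : nat) (K : set 'rV[R]_n)
  (p : 'rV[R]_n) : Prop :=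
  K p /\ forall q, K q -> dotv p p <= dotv q q.

Definition on_sphere (R : realType) (n : nat) (u : 'rV[R]_n) : Prop :=
  dotv u u = 1.

Definition on_ray (R : realType) (n : nat) (u p : 'rV[R]_n) : Prop :=
  exists lam : R, 0 < lam /\ p = lam *: u.

Definition inCu (R : realType) (n : nat) (u : 'rV[R]_n) (K : set 'rV[R]_n) : Prop :=
  [/\ inC K, K <> set0, K <> setT,
      (exists p, closest_to_origin K p) &
      (forall p, closest_to_origin K p -> on_ray u p)].

From mathcomp Require Import all_boot all_order all_algebra.
From mathcomp Require Import boolp classical_sets reals.
From mathcomp Require Import ring lra.
Set Implicit Arguments. Unset Strict Implicit. Unset Printing Implicit Defensive.
Import Order.TTheory GRing.Theory Num.Theory.
Local Open Scope ring_scope.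
Local Open Scope classical_set_scope.

(** Every [T L] is convex, so its closest point [p] to the origin satisfies
   the variational inequality [<p, p> <= <p, q>] on [T L].  Hence the inverted
   point [p / |p|^2] lies in [T (T L)]; and since [<p, y> >= 1] on [T (T L)], it
   also satisfies the characterising inequality of the closest point of
   [T (T L)].  Inversion keeps [p] on its ray. *)

Section Dot.
Variables (R : realType) (n : nat).
Implicit Types (x y z : 'rV[R]_n) (a : R).

Lemma dotvC x y : dotv x y = dotv y x.
Proof. by apply: eq_bigr => i _; rewrite mulrC. Qed.

Lemma dotvDr x y z : dotv x (y + z) = dotv x y + dotv x z.
Proof. by rewrite /dotv -big_split; apply: eq_bigr => i _; rewrite mxE mulrDr. Qed.

Lemma dotvBr x y z : dotv x (y - z) = dotv x y - dotv x z.
Proof. by rewrite /dotv -sumrB; apply: eq_bigr => i _; rewrite !mxE mulrBr. Qed.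

Lemma dotvZr a x y : dotv x (a *: y) = a * dotv x y.
Proof. by rewrite /dotv mulr_sumr; apply: eq_bigr => i _; rewrite mxE mulrCA. Qed.

Lemma dotv0r x : dotv x 0 = 0.
Proof. by rewrite -(scale0r 0) dotvZr mul0r. Qed.

Lemma dotvDl x y z : dotv (y + z) x = dotv y x + dotv z x.
Proof. by rewrite dotvC dotvDr !(dotvC x). Qed.

Lemma dotvBl x y z : dotv (y - z) x = dotv y x - dotv z x.
Proof. by rewrite dotvC dotvBr !(dotvC x). Qed.

Lemma dotvZl a x y : dotv (a *: y) x = a * dotv y x.
Proof. by rewrite dotvC dotvZr dotvC. Qed.

Lemma dotv_ge0 x : 0 <= dotv x x.
Proof. by apply: sumr_ge0 => i _; rewrite -expr2 sqr_ge0. Qed.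

Lemma dotv_eq0 x : (dotv x x == 0) = (x == 0).
Proof.
apply/eqP/eqP => [x0|->]; last exact: dotv0r.
apply/rowP => j; rewrite mxE.
have sq_ge0 (i : 'I_n) : true -> 0 <= x ord0 i * x ord0 i.
  by move=> _; rewrite -expr2 sqr_ge0.
have := @psumr_eq0P _ _ _ _ sq_ge0 x0 j isT.
by move/eqP; rewrite mulf_eq0 orbb => /eqP.
Qed.

Lemma dotv_gt0 x : x != 0 -> 0 < dotv x x.
Proof. by rewrite -dotv_eq0 lt_def dotv_ge0 andbT. Qed.

Lemma dotv_shift p y :
  dotv y y = dotv (y - p) (y - p) + 2 * dotv p y - dotv p p.
Proof. by rewrite !dotvBl !dotvBr (dotvC y p); ring. Qed.

End Dot.

Section ClosestPoint.
Variables (R : realType) (n : nat).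
Implicit Types (K : set 'rV[R]_n) (p q : 'rV[R]_n).

Definition convex_set K :=
  forall p q t, K p -> K q -> 0 <= t <= 1 -> K (p + t *: (q - p)).

(* Moving from [p] towards [q] by [t = c / (c + |q - p|^2)], where
   [c = <p, p> - <p, q>], lowers the squared norm by [t c (1 + t)]. *)
Lemma closest_to_origin_dotv_le K p q :
  convex_set K -> closest_to_origin K p -> K q -> dotv p p <= dotv p q.
Proof.
move=> convK [Kp pmin] Kq; rewrite leNgt; apply/negP => pq_lt.
set c := dotv p p - dotv p q; set D := dotv (q - p) (q - p).
have c_gt0 : 0 < c by rewrite subr_gt0.
have D_ge0 : 0 <= D := dotv_ge0 _.
have cD_gt0 : 0 < c + D by lra.
set t := c / (c + D).
have tcD : t * (c + D) = c by rewrite mulfVK // gt_eqF.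
have t_gt0 : 0 < t by rewrite divr_gt0.
have t_le1 : t <= 1 by rewrite ler_pdivrMr // mul1r; lra.
have := pmin _ (convK p q t Kp Kq (introT andP (conj (ltW t_gt0) t_le1))).
have tD : t * D = c - t * c by move: tcD; rewrite mulrDr; lra.
have -> : dotv (p + t *: (q - p)) (p + t *: (q - p)) = dotv p p - t * c * (1 + t).
  rewrite dotvDl !dotvDr !dotvZl !dotvZr (dotvC (q - p) p) dotvBr -/D tD /c.
  ring.
have : 0 < t * c * (1 + t) by apply: mulr_gt0; [exact: mulr_gt0 | lra].
lra.
Qed.

Lemma dotv_le_closest_to_origin K p :
  K p -> (forall q, K q -> dotv p p <= dotv p q) -> closest_to_origin K p.
Proof.
move=> Kp le_p; split=> // q Kq; rewrite (dotv_shift p q).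
by have := le_p q Kq; have := dotv_ge0 (q - p); lra.
Qed.

Lemma dotv_le_closest_to_origin_unique K p q :
  K p -> (forall q, K q -> dotv p p <= dotv p q) ->
  closest_to_origin K q -> q = p.
Proof.
move=> Kp le_p [Kq qmin]; apply/eqP; rewrite -subr_eq0 -dotv_eq0 eq_le dotv_ge0.
have := qmin p Kp; have := le_p q Kq; rewrite (dotv_shift p q) andbT; lra.
Qed.

End ClosestPoint.

Section Polarity.
Variables (R : realType) (n : nat).
Implicit Types (A K : set 'rV[R]_n) (p q y : 'rV[R]_n).

Lemma Tmap_convex A : convex_set (Tmap A).
Proof.
move=> p q t Ap Aq /andP[t_ge0 t_le1] x Ax.
have := Ap x Ax; have := Aq x Ax; rewrite dotvDr dotvZr dotvBr; nra.
Qed.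

Lemma Tmap_set0 : Tmap set0 = [set: 'rV[R]_n].
Proof. by apply/seteqP; split=> // y _ x. Qed.

Lemma Tmap_has0 A : Tmap A 0 -> A = set0.
Proof.
move=> A0; apply/seteqP; split=> // x Ax.
by have := A0 x Ax; rewrite dotv0r ler10.
Qed.

Definition invv p := (dotv p p)^-1 *: p.

Lemma Tmap_invv K p : p != 0 ->
  (forall q, K q -> dotv p p <= dotv p q) -> Tmap K (invv p).
Proof.
move=> p0 le_p q Kq; rewrite dotvC dotvZl.
by rewrite ler_pdivlMl ?dotv_gt0 // mulr1 le_p.
Qed.

Lemma invv_dotv_le K p y : p != 0 -> K p -> Tmap K y ->
  dotv (invv p) (invv p) <= dotv (invv p) y.
Proof.
move=> p0 Kp Ty; have pp_gt0 := dotv_gt0 p0.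
rewrite !dotvZl dotvZr mulVf ?gt_eqF // mulr1.
by rewrite ler_pMr ?invr_gt0 // Ty.
Qed.

Lemma on_rayZ u p a : 0 < a -> on_ray u p -> on_ray u (a *: p).
Proof.
by move=> a_gt0 [lam [lam_gt0 ->]]; exists (a * lam); rewrite mulr_gt0 ?scalerA.
Qed.

End Polarity.

Theorem lemma5p2 (R : realType) (n : nat) (u : 'rV[R]_n) (K : set 'rV[R]_n) :
  on_sphere u -> inCu u K -> inCu u (Tmap K).
Proof.
move=> _ [[L ->] L0 LT [p cp] ray_p].
have p0 : p != 0.
  apply/eqP => p0; apply: LT.
  by rewrite (@Tmap_has0 _ _ L) ?Tmap_set0 // -p0; exact: cp.1.
have le_p := closest_to_origin_dotv_le (@Tmap_convex _ _ L) cp.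
have Ty0 := Tmap_invv p0 le_p.
have le_y0 y := @invv_dotv_le _ _ _ _ y p0 cp.1.
split.
- by exists (Tmap L).
- by move=> T0; rewrite T0 in Ty0.
- by move=> TT; apply/L0/Tmap_has0; rewrite TT.
- by exists (invv p); apply: dotv_le_closest_to_origin.
- move=> q /(dotv_le_closest_to_origin_unique Ty0 le_y0) ->.
  by apply: on_rayZ (ray_p p cp); rewrite invr_gt0 dotv_gt0.
Qed.
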